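(* Let $\mathcal{SB}=\langle\mathcal{L},A,\to,\text{supp}\rangle$ be a strongly saturated SBAF. Then every confident weakly coherent argument extension $E\subseteq A$ is a preferred extension of $\langle A,\to\rangle$.
   Context: A language is a triple $\mathcal{L}=\langle L,\overline{\cdot},n\rangle$: $L$ is a nonempty set of sentences; $\overline{\cdot}$ assigns to each $s\in L$ a set $\overline{s}\subseteq L$ of sentences incompatible with $s$, and is symmetric; $n$ is a partial naming function assigning to an argument $a$ a sentence $n(a)\in L$ (if undefined, put $\overline{n(a)}:=\emptyset$), with $\overline{n(\langle\{t\},t\rangle)}=\emptyset$. An argument is a pair $a=\langle Prem(a),Conc(a)\rangle$ with $Prem(a)$ a nonempty finite subset of $L$ and $Conc(a)\in L$; $Sent(a):=Prem(a)\cup\{Conc(a)\}$, $Sent(E):=\bigcup_{a\in E}Sent(a)$. The minimal argument for $s$ is $\langle\{s\},s\rangle$. A set $E$ supports $a$ if $Prem(a)\subseteq Sent(E)$; $E$ contains undercutting information for $a$ if $\overline{n(a)}\cap Sent(E)\neq\emptyset$. Argument $a$ attacks $b$ ($a\to b$) if $Conc(a)\in\overline{s}$ for some $s\in Sent(b)$ or $Conc(a)\in\overline{n(b)}$. An SBAF is $\langle\mathcal{L},A,\to,\text{supp}\rangle$ with $A$ a finite set of arguments. For $E\subseteq A$: $E$ defends $a\in A$ if for every $b\in A$ with $b\to a$ some element of $E$ attacks $b$; $E$ is conflict-free if no $a,b\in E$ with $a\to b$; admissible if conflict-free and defends all its elements; preferred if $\subseteq$-maximal among admissible sets. $E$ is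 weakly coherent if it is admissible and every $a\in A$ supported by $E$, for which $E$ contains no undercutting information and which $E$ defends, belongs to $E$. $S$ is compatible if no $s,t\in S$ with $s\in\overline t$. $Arg_s(S):=\{a\in A\mid Prem(a)\subseteq S\text{ and }\overline{n(a)}\cap S=\emptyset\}$; $R^S(E):=\{a\in A\mid a\in Arg_s(S)\text{ and }E\text{ defends }a\}$. For compatible $S$, $Init(S)$ is the largest admissible subset of $\{a\in A\mid Sent(a)\subseteq S\text{ and }\overline{n(a)}\cap S=\emptyset\}$, and $Arg_w(S)$ is the $\subseteq$-least set $E$ with $Init(S)\subseteq E$ and $R^S(E)=E$. A weakly adequate language extension is a compatible $S\subseteq Sent(A)$ with $Sent(a)\subseteq S$ for all $a\in Arg_w(S)$; it is confident if it is $\subseteq$-maximal among weakly adequate language extensions. An argument extension $E$ is confident weakly coherent if it is weakly coherent and $E=Arg_w(S)$ for some confident weakly adequate language extension $S$. The SBAF is strongly saturated if (i) for every $s\in Sent(A)$ for which some $t\in Sent(A)\cap\overline{s}$ exists, $A$ contains both the minimal argument for $s$ and the minimal argument for $t$, and (ii) for every $u\in Sent(A)$ with $u\in\overline{n(a)}$ for some $a\in A$, $A$ contains the minimal argument for $u$. *)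

From mathcomp Require Import all_boot.
From mathcomp Require Import finmap.
Set Implicit Arguments. Unset Strict Implicit. Unset Printing Implicit Defensive.
Local Open Scope fset_scope.

Definition Arg (S : choiceType) : Type := ({fset S} * S)%type.
Definition Prem {S : choiceType} (a : Arg S) : {fset S} := a.1.
Definition Conc {S : choiceType} (a : Arg S) : S := a.2.
Definition minarg {S : choiceType} (s : S) : Arg S := ([fset s], s).
Definition Sent {S : choiceType} (a : Arg S) (x : S) : Prop :=
  x \in Prem a \/ x = Conc a.

Section SBAF.
Variable S : choiceType.
(* inc s t  <->  t ∈ overline(s) *)
Variable inc : S -> S -> Prop.
Variable n : Arg S -> option S.
Variable A : {fset Arg S}.

Definition argset := Arg S -> Prop.
Definition sentset := S -> Prop.
Definition subA (E : argset) : Prop := forall a, E a -> a \in A.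
Definition incl {T : Type} (X Y : T -> Prop) : Prop := forall x, X x -> Y x.

(* t ∈ overline(n(a)), with overline(n(a)) = ∅ when n(a) is undefined *)
Definition incn (a : Arg S) (t : S) : Prop :=
  match n a with Some s => inc s t | None => False end.

Definition SentE (E : argset) (x : S) : Prop := exists a, E a /\ Sent a x.
Definition SentA (x : S) : Prop := exists a, a \in A /\ Sent a x.

Definition attacks (a b : Arg S) : Prop :=
  (exists s, Sent b s /\ inc s (Conc a)) \/ incn b (Conc a).

Definition defends (E : argset) (a : Arg S) : Prop :=
  forall b, b \in A -> attacks b a -> exists c, E c /\ attacks c b.
Definition conflict_free (E : argset) : Prop :=
  forall a b, E a -> E b -> ~ attacks a b.
Definition admissible (E : argset) : Prop :=
  conflict_free E /\ (forall a, E a -> defends E a).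
Definition preferred (E : argset) : Prop :=
  subA E /\ admissible E /\
  (forall F, subA F -> admissible F -> incl E F -> incl F E).

Definition supports (E : argset) (a : Arg S) : Prop :=
  forall s, s \in Prem a -> SentE E s.
Definition undercut_info (E : argset) (a : Arg S) : Prop :=
  exists t, incn a t /\ SentE E t.

Definition weakly_coherent (E : argset) : Prop :=
  admissible E /\
  (forall a, a \in A -> supports E a -> ~ undercut_info E a -> defends E a -> E a).

Definition compatible (X : sentset) : Prop :=
  forall s t, X s -> X t -> ~ inc t s.

Definition Arg_s (X : sentset) (a : Arg S) : Prop :=
  a \in A /\ (forall s, s \in Prem a -> X s) /\ (forall t, incn a t -> ~ X t).
Definition RS (X : sentset) (E : argset) (a : Arg S) : Prop :=
  Arg_s X a /\ defends E a.

Definition Init_cand (X : sentset) (a : Arg S) : Prop :=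
  a \in A /\ (forall s, Sent a s -> X s) /\ (forall t, incn a t -> ~ X t).
(* Init(X): the largest admissible subset of Init_cand X, written as the union
   of all admissible subsets of it (it is the largest one, since for compatible
   X the candidate set is conflict-free). *)
Definition Init (X : sentset) (a : Arg S) : Prop :=
  exists J, incl J (Init_cand X) /\ admissible J /\ J a.
(* Arg_w(X): the ⊆-least E with Init X ⊆ E and R^X(E) = E, written as the
   intersection of all such E (it is itself one, by Knaster–Tarski). *)
Definition Arg_w (X : sentset) (a : Arg S) : Prop :=
  forall F : argset, incl (Init X) F -> (forall b, RS X F b <-> F b) -> F a.

Definition weakly_adequate (X : sentset) : Prop :=
  incl X SentA /\ compatible X /\
  (forall a, Arg_w X a -> forall s, Sent a s -> X s).
Definition confident (X : sentset) : Prop :=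
  weakly_adequate X /\ (forall Y, weakly_adequate Y -> incl X Y -> incl Y X).

Definition confident_weakly_coherent (E : argset) : Prop :=
  weakly_coherent E /\
  exists X, confident X /\ (forall a, E a <-> Arg_w X a).

Definition strongly_saturated : Prop :=
  (forall s t, SentA s -> SentA t -> inc s t -> minarg s \in A /\ minarg t \in A) /\
  (forall u a, SentA u -> a \in A -> incn a u -> minarg u \in A).

Definition is_SBAF : Prop :=
  inhabited S /\
  (forall s t, inc s t -> inc t s) /\
  (forall t u, ~ incn (minarg t) u) /\
  (forall a, a \in A -> Prem a != fset0).

End SBAF.

From mathcomp Require Import all_boot finmap boolp.

(* Extend an admissible F ⊇ E to a preferred P.  Strong saturation provides
   minimal arguments for contrary or undercutting sentences; such a minimal
   argument is either attacked by P (which defends itself) or lies in E ⊆ P, and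
   either way P would attack itself.  Hence Y := X ∪ Sent(P) is compatible and
   undercuts nothing in P, so the preferred P contains Init(Y) and is a fixpoint
   of R^Y; thus Arg_w(Y) ⊆ P and Y is weakly adequate.  Confidence of X gives
   Sent(P) ⊆ X, whence P ⊆ Init(X) ⊆ Arg_w(X) = E. *)

Set Implicit Arguments.
Unset Strict Implicit.
Unset Printing Implicit Defensive.

Local Open Scope fset_scope.

Lemma minarg_sent (S : choiceType) (s x : S) : Sent (minarg s) x -> x = s.
Proof. by rewrite /Sent /Prem /Conc /= inE => -[/eqP|]. Qed.

Section Admissible.

Variables (S : choiceType) (inc : S -> S -> Prop) (n : Arg S -> option S).
Variable A : {fset Arg S}.

Local Notation attacks := (attacks inc n).
Local Notation defends := (defends inc n A).
Local Notation admissible := (admissible inc n A).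
Local Notation preferred := (preferred inc n A).
Local Notation subA := (subA A).

Lemma defended_not_attacked P a c :
  subA P -> conflict_free inc n P -> defends P a -> P c -> ~ attacks c a.
Proof.
move=> PA Pcf Pdef Pc ca; have [d [Pd dc]] := Pdef c (PA c Pc) ca.
exact: Pcf Pd Pc dc.
Qed.

Lemma admissibleU1 P a :
  subA P -> admissible P -> a \in A -> defends P a ->
  admissible (fun x => P x \/ x = a).
Proof.
move=> PA [Pcf Pdef] aA Pdef_a; split.
- have Pa_free := defended_not_attacked PA Pcf Pdef_a.
  move=> x y [Px|->] [Py|->] xy.
  + exact: Pcf Px Py xy.
  + exact: Pa_free Px xy.
  + have [c [Pc ca]] := Pdef y Py a aA xy; exact: Pa_free Pc ca.
  + have [c [Pc ca]] := Pdef_a a aA xy; exact: Pa_free Pc ca.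
- move=> x Px b bA bx.
  have Pdef_x : defends P x by case: Px => [/Pdef|->].
  by have [c [Pc cb]] := Pdef_x b bA bx; exists c; split; first left.
Qed.

Lemma admissibleU P J :
  admissible P -> admissible J ->
  (forall p j, P p -> J j -> ~ attacks p j /\ ~ attacks j p) ->
  admissible (fun x => P x \/ J x).
Proof.
move=> [Pcf Pdef] [Jcf Jdef] PJ; split.
- move=> x y [Px|Jx] [Py|Jy].
  + exact: Pcf.
  + exact: (PJ x y Px Jy).1.
  + exact: (PJ y x Py Jx).2.
  + exact: Jcf.
- move=> x [Px|Jx] b bA bx.
  + by have [c [Pc cb]] := Pdef x Px b bA bx; exists c; split; first left.
  + by have [c [Pc cb]] := Jdef x Jx b bA bx; exists c; split; first right.
Qed.

Lemma preferred_defends P a : preferred P -> a \in A -> defends P a -> P a.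
Proof.
move=> [PA [Padm Pmax]] aA Pdef_a.
have PaA : subA (fun x => P x \/ x = a) by move=> x [/PA|->].
apply: (Pmax _ PaA (admissibleU1 PA Padm aA Pdef_a)); [by move=> x; left | by right].
Qed.

Lemma preferred_absorbs P J :
  preferred P -> subA J -> admissible J ->
  (forall p j, P p -> J j -> ~ attacks p j /\ ~ attacks j p) -> incl J P.
Proof.
move=> [PA [Padm Pmax]] JA Jadm PJ j Jj.
have PJA : subA (fun x => P x \/ J x) by move=> x [/PA|/JA].
apply: (Pmax _ PJA (admissibleU Padm Jadm PJ)); [by move=> x; left | by right].
Qed.

(* [A] is finite: a maximal admissible superset is one whose trace on [A] has
   maximal cardinality. *)
Lemma admissible_sub_preferred F :
  subA F -> admissible F -> exists2 P, preferred P & incl F P.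
Proof.
move=> FA Fadm.
pose trace (G : argset S) := [fset a in A | `[< G a >]].
have traceE G y : (y \in trace G) = (y \in A) && `[< G y >] by rewrite !inE.
pose extends G := subA G /\ admissible G /\ incl F G.
pose haStrace k := `[< exists2 G, extends G & #|` trace G| = k >].
have exP : exists k, haStrace k.
  by exists #|` trace F|; apply/asboolP; exists F; split=> //; split.
have ubP k : haStrace k -> k <= #|` A|.
  move=> /asboolP[G _ <-]; apply/fsubset_leq_card/fsubsetP => x.
  by rewrite traceE => /andP[].
case: (ex_maxnP exP ubP) => _ /asboolP[G [GA [Gadm FG]] <-] Gmax.
exists G => //; split=> //; split=> // H HA Hadm GH x Hx.
apply: contrapT => Gx.
have GH_trace : trace G `<` trace H.
  rewrite fproperEneq; apply/andP; split.
  - apply/negP => /eqP eqGH.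
    have : x \in trace H by rewrite traceE (HA x Hx); apply/asboolP.
    by rewrite -eqGH traceE => /andP[_ /asboolP].
  - apply/fsubsetP => y; rewrite !traceE => /andP[-> /asboolP /GH Hy].
    exact/asboolP.
have Hext : haStrace #|` trace H|.
  by apply/asboolP; exists H => //; split=> //; split=> // y /FG /GH.
by have := Gmax _ Hext; rewrite leqNgt (fproper_ltn_card GH_trace).
Qed.

End Admissible.

Section Saturated.

Variables (S : choiceType) (inc : S -> S -> Prop) (n : Arg S -> option S).
Variable A : {fset Arg S}.

Hypothesis inc_sym : forall s t, inc s t -> inc t s.
Hypothesis minarg_not_undercut : forall t u, ~ incn inc n (minarg t) u.
Hypothesis contrary_minargs : forall s t,
  SentA A s -> SentA A t -> inc s t -> minarg s \in A /\ minarg t \in A.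
Hypothesis undercutter_minarg : forall u a,
  SentA A u -> a \in A -> incn inc n a u -> minarg u \in A.

Local Notation attacks := (attacks inc n).
Local Notation incn := (incn inc n).
Local Notation compatible := (compatible inc).
Local Notation admissible := (admissible inc n A).
Local Notation preferred := (preferred inc n A).
Local Notation Init := (Init inc n A).
Local Notation Arg_w := (Arg_w inc n A).
Local Notation subA := (subA A).
Local Notation SentA := (SentA A).

Lemma attacks_minarg c t : attacks c (minarg t) -> inc t (Conc c).
Proof. by case=> [[s [/minarg_sent -> //]]|/minarg_not_undercut]. Qed.

Lemma Arg_w_Init X : incl (Init X) (Arg_w X).
Proof. by move=> a Ia F /(_ a Ia). Qed.

Lemma minarg_Init X s : compatible X -> X s -> minarg s \in A -> Init X (minarg s).
Proof.
move=> Xcomp Xs sA; exists (fun x => x = minarg s); split; last split=> //.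
- move=> _ ->; split=> //; split; first by move=> y /minarg_sent ->.
  by move=> t /minarg_not_undercut.
- split; first by move=> _ _ -> -> /attacks_minarg; apply: Xcomp.
  move=> _ -> b _ [[s' [/minarg_sent -> bs]]|/minarg_not_undercut //].
  exists (minarg s); split=> //; left; exists (Conc b).
  by split; [right | exact: inc_sym].
Qed.

Lemma SentE_SentA (P : argset S) : subA P -> incl (SentE P) SentA.
Proof. by move=> PA x [p [Pp px]]; exists p; split; first exact: PA. Qed.

Section AdmissibleSet.

Variable P : argset S.
Hypotheses (PA : subA P) (Padm : admissible P).

Lemma admissible_counters_minarg b t :
  P b -> minarg t \in A -> attacks (minarg t) b -> exists2 c, P c & inc t (Conc c).
Proof.
move=> Pb tA tb; have [c [Pc /attacks_minarg ct]] := Padm.2 b Pb _ tA tb.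
by exists c.
Qed.

Lemma SentE_compatible : compatible (SentE P).
Proof.
move=> s t [a [Pa aS]] [b [Pb bt]] ts.
have Ss : SentA s by apply: (SentE_SentA PA); exists a.
have St : SentA t by apply: (SentE_SentA PA); exists b.
have [_ sA] := contrary_minargs St Ss ts.
have sb : attacks (minarg s) b by left; exists t.
have [c Pc sc] := admissible_counters_minarg Pb sA sb.
by apply: Padm.1 Pc Pa _; left; exists s.
Qed.

Lemma admissible_undercut_free Z p t :
  compatible Z -> incl Z SentA -> incl (SentE P) Z -> P p -> incn p t -> ~ Z t.
Proof.
move=> Zcomp ZA PZ Pp pt Zt.
have tA := undercutter_minarg (ZA t Zt) (PA Pp) pt.
have [c Pc tc] := admissible_counters_minarg Pp tA (or_intror pt).
by apply: Zcomp (PZ _ _) Zt tc; exists c; split; last right.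
Qed.

Lemma admissible_sub_Init X :
  compatible X -> incl X SentA -> incl (SentE P) X -> incl P (Init X).
Proof.
move=> Xcomp XA PX p Pp; exists P; split=> // q Pq; split; first exact: PA.
split; first by move=> s qs; apply: PX; exists q.
by move=> t qt; apply: admissible_undercut_free qt.
Qed.

End AdmissibleSet.

Lemma compatibleU X Y :
  compatible X -> compatible Y -> (forall u v, X u -> Y v -> ~ inc v u) ->
  compatible (fun x => X x \/ Y x).
Proof.
move=> Xcomp Ycomp XY s t [Xs|Ys] [Xt|Yt] ts.
- exact: Xcomp Xs Xt ts.
- exact: XY Xs Yt ts.
- exact: XY Xt Ys (inc_sym ts).
- exact: Ycomp Ys Yt ts.
Qed.

Section PreferredSet.

Variable P : argset S.
Hypothesis Ppref : preferred P.

Let PA : subA P := Ppref.1.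
Let Padm : admissible P := Ppref.2.1.

Section Language.

Variable Y : sentset S.
Hypotheses (Ycomp : compatible Y) (YA : incl Y SentA) (PY : incl (SentE P) Y).

Lemma preferred_undercut_free p t : P p -> incn p t -> ~ Y t.
Proof. by move=> Pp pt; apply: (admissible_undercut_free PA Padm Ycomp YA PY Pp pt). Qed.

Lemma preferred_Init : incl (Init Y) P.
Proof.
move=> j [J [JY [Jadm Jj]]].
have PConcY p : P p -> Y (Conc p) by move=> Pp; apply: PY; exists p; split; last right.
have JA : subA J by move=> x /JY[].
apply: (preferred_absorbs Ppref JA Jadm _ Jj) => p q Pp Jq.
have [_ [qY qfree]] := JY q Jq.
have qConcY : Y (Conc q) by apply: qY; right.
split=> [[[s [qs sp]]|qp] | [[s [ps sq]]|pq]].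
- exact: Ycomp (PConcY p Pp) (qY s qs) sp.
- exact: qfree qp (PConcY p Pp).
- by apply: Ycomp qConcY (PY _) sq; exists p.
- exact: preferred_undercut_free Pp pq qConcY.
Qed.

Lemma preferred_RS_fixpoint b : RS inc n A Y P b <-> P b.
Proof.
split=> [[[bA _] Pdef_b]|Pb]; first exact: preferred_defends Pdef_b.
split; last exact: Padm.2.
split; first exact: PA.
split; first by move=> s bs; apply: PY; exists b; split=> //; left.
by move=> t; apply: preferred_undercut_free.
Qed.

Lemma Arg_w_sub_preferred : incl (Arg_w Y) P.
Proof. by move=> a /(_ P preferred_Init preferred_RS_fixpoint). Qed.

End Language.

Lemma minarg_sentences_compatible X :
  incl X SentA -> (forall u, X u -> minarg u \in A -> P (minarg u)) ->
  forall u v, X u -> SentE P v -> ~ inc v u.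
Proof.
move=> XA XP u v Xu [p [Pp pv]] vu.
have Sv : SentA v by apply: (SentE_SentA PA); exists p.
have [_ uA] := contrary_minargs Sv (XA u Xu) vu.
by apply: Padm.1 (XP u Xu uA) Pp _; left; exists v.
Qed.

Lemma weakly_adequateU X :
  compatible X -> incl X SentA -> (forall u, X u -> minarg u \in A -> P (minarg u)) ->
  weakly_adequate inc n A (fun x => X x \/ SentE P x).
Proof.
move=> Xcomp XA XP.
have Ycomp : compatible (fun x => X x \/ SentE P x).
  apply: compatibleU => //; first exact: SentE_compatible.
  exact: minarg_sentences_compatible.
have PY : incl (SentE P) (fun x => X x \/ SentE P x) by move=> x; right.
have YA : incl (fun x => X x \/ SentE P x) SentA.
  by move=> x [/XA|/(SentE_SentA PA)].
split=> //; split=> // a /(Arg_w_sub_preferred Ycomp YA PY) Pa s aS.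
by right; exists a.
Qed.

End PreferredSet.

End Saturated.

Theorem mainTheorem18 (S : choiceType) (inc : S -> S -> Prop)
  (n : Arg S -> option S) (A : {fset Arg S}) :
  is_SBAF inc n A ->
  strongly_saturated inc n A ->
  forall E : argset S, subA A E ->
  confident_weakly_coherent inc n A E ->
  preferred inc n A E.
Proof.
move=> [_ [inc_sym [minarg_not_undercut _]]] [contrary_minargs undercutter_minarg].
move=> E EA.
move=> [[Eadm _] [X [[[XA [Xcomp _]] Xmax] EX]]].
have EInit : incl (Init inc n A X) E by move=> a /Arg_w_Init /EX.
split=> //; split=> // F FA Fadm EF.
have [P Ppref FP] := admissible_sub_preferred FA Fadm.
have XP u : X u -> minarg u \in A -> P (minarg u).
  by move=> Xu uA; apply/FP/EF/EInit/minarg_Init.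
have Ywa := weakly_adequateU inc_sym minarg_not_undercut contrary_minargs
  undercutter_minarg Ppref Xcomp XA XP.
have PX : incl (SentE P) X.
  by move=> x Px; apply: (Xmax _ Ywa); [move=> y; left | right].
move=> a /FP Pa; apply: EInit.
exact: (admissible_sub_Init minarg_not_undercut undercutter_minarg
  Ppref.1 Ppref.2.1 Xcomp XA PX).
Qed.
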